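(* Let $X$ be a (possibly large) category with an initial object. Then $\mathbf{Cat}/\!/X$ is infinitary extensive.
   Context: $\mathbf{Cat}$ denotes the category of small categories and functors. For a (possibly large) category $X$, the lax comma category $\mathbf{Cat}/\!/X$ has as objects pairs $(W,a)$ with $W$ a small category and $a:W\to X$ a functor; a morphism $(f,\gamma):(W,a)\to(Y,b)$ consists of a functor $f:W\to Y$ and a natural transformation $\gamma:a\Rightarrow b\circ f$. The composite of $(f,\gamma):(W,a)\to(Y,b)$ and $(g,\chi):(Y,b)\to(Z,c)$ is $(g\circ f,(\chi * f)\cdot\gamma)$, where $(\chi * f)_w=\chi_{f(w)}$, and the identity on $(W,a)$ is $(\mathrm{id}_W,\mathrm{id}_a)$. A category $\mathcal{C}$ is infinitary extensive if it has all small coproducts and, for every small family $(A_i)_{i\in L}$ of objects, the functor $\prod_{i\in L}\mathcal{C}/A_i\to\mathcal{C}/\coprod_{i\in L}A_i$, $(B_i\to A_i)_i\mapsto(\coprod_i B_i\to\coprod_i A_i)$, is an equivalence of categories (equivalently: pullbacks along coproduct coprojections exist, and coproducts are disjoint and stable under pullback). *)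

From Stdlib Require Import ProofIrrelevance FunctionalExtensionality.

Set Universe Polymorphism.
Set Polymorphic Inductive Cumulativity.
Set Implicit Arguments.
Unset Strict Implicit.

(* A category with objects in Type@{o} and hom-types in Type@{h}; equality of
   morphisms is Leibniz equality. A category is *small* when o and h are the
   "small" universe. *)
Record Category@{o h} := {
  ob :> Type@{o};
  hom : ob -> ob -> Type@{h};
  idc : forall a, hom a a;
  comp : forall a b c, hom b c -> hom a b -> hom a c;
  comp_assoc : forall a b c d (h : hom c d) (g : hom b c) (f : hom a b),
      comp h (comp g f) = comp (comp h g) f;
  comp_id_l : forall a b (f : hom a b), comp (idc b) f = f;
  comp_id_r : forall a b (f : hom a b), comp f (idc a) = f }.
Arguments hom {_} a b.
Arguments idc {_} a.
Arguments comp {_ a b c} _ _.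

Record Functor (C D : Category) := {
  fobj :> C -> D;
  fmap : forall a b, hom a b -> hom (fobj a) (fobj b);
  fmap_id : forall a, fmap (idc a) = idc (fobj a);
  fmap_comp : forall a b c (g : hom b c) (f : hom a b),
      fmap (comp g f) = comp (fmap g) (fmap f) }.
Arguments fmap {C D} _ {a b} _.

Record NatTrans (C D : Category) (F G : Functor C D) := {
  ncomp :> forall a, hom (F a) (G a);
  nat_sq : forall a b (f : hom a b),
      comp (ncomp b) (fmap F f) = comp (fmap G f) (ncomp a) }.

Definition Fid (C : Category) : Functor C C.
Proof.
  refine {| fobj := fun a => a; fmap := fun a b f => f |}; reflexivity.
Defined.

Definition Fcomp (C D E : Category) (G : Functor D E) (F : Functor C D) : Functor C E.
Proof.
  refine {| fobj := fun a => G (F a); fmap := fun a b f => fmap G (fmap F f) |}.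
  - intro a; rewrite !fmap_id; reflexivity.
  - intros a b c g f; rewrite !fmap_comp; reflexivity.
Defined.

Definition IsIso (C : Category) (a b : C) (f : hom a b) : Prop :=
  exists g : hom b a, comp g f = idc a /\ comp f g = idc b.

Definition IsNatIso (C D : Category) (F G : Functor C D) (al : NatTrans F G) : Prop :=
  forall a, IsIso (al a).

Definition IsEquivalence (C D : Category) (F : Functor C D) : Prop :=
  exists (G : Functor D C) (eta : NatTrans (Fid C) (Fcomp G F))
         (eps : NatTrans (Fcomp F G) (Fid D)),
    IsNatIso eta /\ IsNatIso eps.

Definition IsInitial (C : Category) (z : C) : Prop :=
  forall a : C, exists h : hom z a, forall h' : hom z a, h' = h.

Definition HasInitial (C : Category) : Prop := exists z : C, IsInitial z.

Definition SliceOb (C : Category) (A : C) := { B : C & hom B A }.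
Definition SliceHom (C : Category) (A : C) (x y : SliceOb A) :=
  { u : hom (projT1 x) (projT1 y) | comp (projT2 y) u = projT2 x }.

Definition slice_id (C : Category) (A : C) (x : SliceOb A) : SliceHom x x :=
  exist _ (idc (projT1 x)) (comp_id_r _).

Definition slice_comp (C : Category) (A : C) (x y z : SliceOb A)
  (g : SliceHom y z) (f : SliceHom x y) : SliceHom x z.
Proof.
  exists (comp (proj1_sig g) (proj1_sig f)).
  destruct g as [g Hg], f as [f Hf]; simpl.
  rewrite comp_assoc, Hg, Hf; reflexivity.
Defined.

Definition Slice (C : Category) (A : C) : Category.
Proof.
  refine {| ob := SliceOb A; hom := @SliceHom C A;
            idc := @slice_id C A; comp := @slice_comp C A |}.
  - intros a b c d [h Hh] [g Hg] [f Hf]; apply subset_eq_compat; apply comp_assoc.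
  - intros a b [f Hf]; apply subset_eq_compat; apply comp_id_l.
  - intros a b [f Hf]; apply subset_eq_compat; apply comp_id_r.
Defined.

Definition ProdCat (L : Type) (C : L -> Category) : Category.
Proof.
  refine {| ob := forall i, C i; hom := fun x y => forall i, hom (x i) (y i);
            idc := fun x i => idc (x i);
            comp := fun x y z g f i => comp (g i) (f i) |}.
  - intros; apply functional_extensionality_dep; intro; apply comp_assoc.
  - intros; apply functional_extensionality_dep; intro; apply comp_id_l.
  - intros; apply functional_extensionality_dep; intro; apply comp_id_r.
Defined.

Unset Implicit Arguments.
Record Coproduct (C : Category) (L : Type) (A : L -> C) := {
  cpob : C;
  cpinj : forall i, hom (A i) cpob;
  cpcopair : forall Z (g : forall i, hom (A i) Z), hom cpob Z;
  cp_beta : forall Z g i, comp (cpcopair Z g) (cpinj i) = g i;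
  cp_unique : forall Z g (h : hom cpob Z),
      (forall i, comp h (cpinj i) = g i) -> h = cpcopair Z g }.
Arguments cpob {C L A} _.
Arguments cpinj {C L A} _ i.
Arguments cpcopair {C L A} _ {Z} g.
Arguments cp_beta {C L A} _ Z g i.
Arguments cp_unique {C L A} _ Z g h _.
Set Implicit Arguments.

(* A choice of coproducts for all families indexed by types in Type@{i}
   ("small coproducts" when i is the small universe). *)
Definition HasCoproducts@{i o h} (C : Category@{o h}) :=
  forall (L : Type@{i}) (A : L -> C), Coproduct C L A.

Lemma cp_eta (C : Category) (L : Type) (A : L -> C) (K : Coproduct C L A) (Z : C)
  (h h' : hom (cpob K) Z) :
  (forall i, comp h (cpinj K i) = comp h' (cpinj K i)) -> h = h'.
Proof.
  intro H.
  rewrite (cp_unique K Z (fun i => comp h' (cpinj K i)) h H).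
  symmetry; apply (cp_unique K Z); reflexivity.
Qed.

Definition cpf_ob@{i o h +} (C : Category@{o h}) (cp : HasCoproducts@{i o h} C)
  (L : Type@{i}) (A : L -> C) (x : ProdCat (fun i => Slice (A i)))
  : Slice (cpob (cp L A)) :=
  existT _ (cpob (cp L (fun i => projT1 (x i))))
    (cpcopair (cp L (fun i => projT1 (x i)))
       (fun i => comp (cpinj (cp L A) i) (projT2 (x i)))).

Definition cpf_hom@{i o h +} (C : Category@{o h}) (cp : HasCoproducts@{i o h} C)
  (L : Type@{i}) (A : L -> C) (x y : ProdCat (fun i => Slice (A i))) (u : hom x y)
  : hom (cpf_ob cp x) (cpf_ob cp y).
Proof.
  exists (cpcopair (cp L (fun i => projT1 (x i)))
            (fun i => comp (cpinj (cp L (fun i => projT1 (y i))) i)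
                           (proj1_sig (u i)))).
  simpl. apply cp_eta; intro i.
  rewrite <- comp_assoc.
  rewrite !(cp_beta (cp L (fun i => projT1 (x i)))).
  rewrite comp_assoc, (cp_beta (cp L (fun i => projT1 (y i)))), <- comp_assoc.
  destruct (u i) as [ui Hui]; simpl; rewrite Hui; reflexivity.
Defined.

Definition CoprodFunctor@{i o h +} (C : Category@{o h}) (cp : HasCoproducts@{i o h} C)
  (L : Type@{i}) (A : L -> C) :
  Functor (ProdCat (fun i => Slice (A i))) (Slice (cpob (cp L A))).
Proof.
  refine {| fobj := @cpf_ob C cp L A; fmap := @cpf_hom C cp L A |}.
  - intro x; apply subset_eq_compat; simpl.
    apply cp_eta; intro i; rewrite (cp_beta (cp L (fun i => projT1 (x i)))).
    simpl; rewrite comp_id_l, comp_id_r; reflexivity.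
  - intros x y z g f; apply subset_eq_compat; simpl.
    apply cp_eta; intro i.
    rewrite (cp_beta (cp L (fun i => projT1 (x i)))), <- comp_assoc.
    rewrite (cp_beta (cp L (fun i => projT1 (x i)))).
    rewrite (comp_assoc (cpcopair (cp L (fun i => projT1 (y i))) _)).
    rewrite (cp_beta (cp L (fun i => projT1 (y i)))).
    rewrite comp_assoc; reflexivity.
Defined.

Definition InfExtensive@{i o h +} (C : Category@{o h}) : Prop :=
  exists cp : HasCoproducts@{i o h} C,
    forall (L : Type@{i}) (A : L -> C), IsEquivalence (CoprodFunctor cp A).

Record SlashOb@{s xo xh} (X : Category@{xo xh}) := {
  sdom : Category@{s s};
  sfun : Functor sdom X }.
Arguments sdom {X} _.
Arguments sfun {X} _.

Definition SlashHom@{s xo xh +} (X : Category@{xo xh}) (x y : SlashOb@{s xo xh} X) :=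
  { f : Functor (sdom x) (sdom y) & NatTrans (sfun x) (Fcomp (sfun y) f) }.

Definition slash_id@{s xo xh +} (X : Category@{xo xh}) (x : SlashOb@{s xo xh} X)
  : SlashHom x x.
Proof.
  exists (Fid (sdom x)).
  refine (@Build_NatTrans _ _ (sfun x) (Fcomp (sfun x) (Fid (sdom x)))
            (fun w => idc (sfun x w)) _).
  intros; simpl; rewrite comp_id_l, comp_id_r; reflexivity.
Defined.

Definition slash_comp@{s xo xh +} (X : Category@{xo xh}) (x y z : SlashOb@{s xo xh} X)
  (G : SlashHom y z) (F : SlashHom x y) : SlashHom x z.
Proof.
  destruct F as [f ga], G as [g ch].
  exists (Fcomp g f).
  refine (@Build_NatTrans _ _ (sfun x) (Fcomp (sfun z) (Fcomp g f))
            (fun w => comp (ch (f w)) (ga w)) _).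
  intros a b u; simpl.
  rewrite <- comp_assoc.
  pose proof (nat_sq ga u) as E; simpl in E; rewrite E.
  rewrite !comp_assoc.
  pose proof (nat_sq ch (fmap f u)) as E2; simpl in E2; rewrite E2.
  reflexivity.
Defined.

Lemma slash_hom_eq (X W Y : Category) (a : Functor W X) (b : Functor Y X)
  (fo : W -> Y) fm p1 q1 p2 q2
  (g1 : NatTrans a (Fcomp b (@Build_Functor W Y fo fm p1 q1)))
  (g2 : NatTrans a (Fcomp b (@Build_Functor W Y fo fm p2 q2))) :
  (forall w, ncomp g1 w = ncomp g2 w) ->
  existT (fun f => NatTrans a (Fcomp b f)) (@Build_Functor W Y fo fm p1 q1) g1
  = existT (fun f => NatTrans a (Fcomp b f)) (@Build_Functor W Y fo fm p2 q2) g2.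
Proof.
  intro H.
  destruct (proof_irrelevance _ p1 p2), (proof_irrelevance _ q1 q2).
  f_equal.
  destruct g1 as [c1 n1], g2 as [c2 n2]; simpl in *.
  assert (c1 = c2) by (apply functional_extensionality_dep; exact H).
  subst; f_equal; apply proof_irrelevance.
Qed.

Definition SlashCat@{s xo xh +} (X : Category@{xo xh}) : Category.
Proof.
  refine {| ob := SlashOb@{s xo xh} X; hom := @SlashHom X;
            idc := @slash_id X; comp := @slash_comp X |}.
  - intros x y z t [h ps] [g ch] [f ga]; simpl.
    apply slash_hom_eq; intro w; simpl; apply comp_assoc.
  - intros x y [f ga]; destruct f; simpl.
    apply slash_hom_eq; intro w; simpl; apply comp_id_l.
  - intros x y [f ga]; destruct f; simpl.
    apply slash_hom_eq; intro w; simpl; apply comp_id_r.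
Defined.

(* Coproducts in Cat//X are disjoint unions: the coproduct of the (W_i, a_i) is
   (coprod_i W_i, [a_i]), since a lax triangle out of a disjoint union is the same as a
   family of lax triangles out of the summands.  The comparison functor
   prod_i Cat//X / A_i --> Cat//X / coprod_i A_i is then fully faithful, because a morphism
   over coprod_i A_i between two coproducts must send the i-th summand into the i-th one
   and so restricts summandwise; and it is essentially surjective, because an object
   (B, f, gamma) over coprod_i A_i is isomorphic to the coproduct of its fibres
   B_i = f^-1(A_i), each lying over A_i via the restrictions of f and gamma. *)

From Stdlib Require Import ProofIrrelevance FunctionalExtensionality.

Set Universe Polymorphism.
Set Implicit Arguments.
Unset Strict Implicit.

(** * Transport of morphisms along equalities of objects *)

Definition hom_cast (C : Category) (x x' y y' : C) (ex : x = x') (ey : y = y')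
  (h : hom x y) : hom x' y' :=
  match ex in _ = x1 return hom x1 y' with
  | eq_refl => match ey in _ = y1 return hom x y1 with eq_refl => h end
  end.

Section HomCast.
Variable C : Category.

Lemma hom_cast_refl (x y : C) (ex : x = x) (ey : y = y) (h : hom x y) :
  hom_cast ex ey h = h.
Proof.
  now rewrite (proof_irrelevance _ ex eq_refl), (proof_irrelevance _ ey eq_refl).
Qed.

Lemma hom_cast_irrelevant (x x' y y' : C) (ex ex' : x = x') (ey ey' : y = y')
  (h : hom x y) : hom_cast ex ey h = hom_cast ex' ey' h.
Proof.
  now rewrite (proof_irrelevance _ ex ex'), (proof_irrelevance _ ey ey').
Qed.

Lemma hom_cast_cast (x x' x'' y y' y'' : C) (ex : x = x') (ey : y = y')
  (ex' : x' = x'') (ey' : y' = y'') (h : hom x y) :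
  hom_cast ex' ey' (hom_cast ex ey h) = hom_cast (eq_trans ex ex') (eq_trans ey ey') h.
Proof. now destruct ex, ey, ex', ey'. Qed.

Lemma hom_castK (x x' y y' : C) (ex : x = x') (ey : y = y') (h : hom x y) :
  hom_cast (eq_sym ex) (eq_sym ey) (hom_cast ex ey h) = h.
Proof. now destruct ex, ey. Qed.

Lemma comp_hom_cast_l (x y z z' : C) (e : z = z') (g : hom y z) (f : hom x y) :
  comp (hom_cast eq_refl e g) f = hom_cast eq_refl e (comp g f).
Proof. now destruct e. Qed.

Lemma comp_hom_cast_r (x y y' z z' : C) (e : y = y') (e' : z = z')
  (g : hom y' z') (f : hom x y) :
  comp g (hom_cast eq_refl e f) =
  hom_cast eq_refl e' (comp (hom_cast (eq_sym e) (eq_sym e') g) f).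
Proof. now destruct e, e'. Qed.

End HomCast.

Lemma fmap_hom_cast (C D : Category) (F : Functor C D) (x x' y y' : C)
  (ex : x = x') (ey : y = y') (h : hom x y) :
  fmap F (hom_cast ex ey h) = hom_cast (f_equal F ex) (f_equal F ey) (fmap F h).
Proof. now destruct ex, ey. Qed.

(** * Equality of functors, natural transformations and morphisms of Cat//X *)

Lemma functor_eq (C D : Category) (F G : Functor C D) (Ho : forall a, F a = G a)
  (Hm : forall a b (f : hom a b), fmap G f = hom_cast (Ho a) (Ho b) (fmap F f)) : F = G.
Proof.
  destruct F as [fo fm p q], G as [go gm p' q']; simpl in *.
  assert (E : fo = go) by (apply functional_extensionality; exact Ho).
  subst go.
  assert (Em : fm = gm).
  { do 3 (apply functional_extensionality_dep; intro).
    now rewrite Hm, hom_cast_refl. }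
  subst gm.
  now rewrite (proof_irrelevance _ p p'), (proof_irrelevance _ q q').
Qed.
Arguments functor_eq {C D F G} Ho Hm.

Lemma fmap_functor_eq (C D : Category) (F G : Functor C D) (E : F = G)
  (Ho : forall a, F a = G a) (a b : C) (f : hom a b) :
  fmap G f = hom_cast (Ho a) (Ho b) (fmap F f).
Proof. destruct E; now rewrite hom_cast_refl. Qed.

Lemma nattrans_eq (C D : Category) (F G : Functor C D) (al be : NatTrans F G) :
  (forall a, al a = be a) -> al = be.
Proof.
  destruct al as [a na], be as [b nb]; simpl; intro H.
  assert (a = b) by (apply functional_extensionality_dep; exact H).
  subst; f_equal; apply proof_irrelevance.
Qed.

Lemma slash_hom_ext (X : Category) (x y : SlashOb X) (f1 f2 : Functor (sdom x) (sdom y))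
  (g1 : NatTrans (sfun x) (Fcomp (sfun y) f1)) (g2 : NatTrans (sfun x) (Fcomp (sfun y) f2))
  (E : f1 = f2) (Ho : forall w, f1 w = f2 w)
  (H : forall w, g2 w = hom_cast eq_refl (f_equal (sfun y) (Ho w)) (g1 w)) :
  existT (fun f => NatTrans (sfun x) (Fcomp (sfun y) f)) f1 g1 = existT _ f2 g2.
Proof.
  destruct E; f_equal; apply nattrans_eq; intro w.
  now rewrite H, hom_cast_refl.
Qed.
Arguments slash_hom_ext {X x y f1 f2 g1 g2} E Ho H.

Lemma ncomp_slash_hom_eq (X : Category) (x y : SlashOb X) (u v : SlashHom x y) (E : u = v)
  (Ho : forall w, projT1 u w = projT1 v w) (w : sdom x) :
  projT2 v w = hom_cast eq_refl (f_equal (sfun y) (Ho w)) (projT2 u w).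
Proof. destruct E; now rewrite hom_cast_refl. Qed.

Lemma slash_comp_fobj (X : Category) (x y z : SlashOb X) (g : SlashHom y z)
  (f : SlashHom x y) (w : sdom x) :
  projT1 (@comp (SlashCat X) _ _ _ g f) w = projT1 g (projT1 f w).
Proof. now destruct f, g. Qed.

(** * A criterion for equivalences of categories *)

Section EquivalenceCriterion.
Variables (C D : Category) (F : Functor C D).
Hypothesis F_faithful : forall a b (f g : hom a b), fmap F f = fmap F g -> f = g.
Variable F_preimage : forall a b, hom (F a) (F b) -> hom a b.
Hypothesis fmap_F_preimage : forall a b (h : hom (F a) (F b)), fmap F (F_preimage h) = h.
Variables (G0 : D -> C) (counit : forall d, hom (F (G0 d)) d)
  (counit_inv : forall d, hom d (F (G0 d))).
Hypotheses (counitK : forall d, comp (counit d) (counit_inv d) = idc d)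
  (counit_invK : forall d, comp (counit_inv d) (counit d) = idc (F (G0 d))).

Definition pseudo_inverse : Functor D C.
Proof.
  refine {| fobj := G0;
            fmap := fun d d' h => F_preimage (comp (counit_inv d') (comp h (counit d))) |}.
  - intro d; apply F_faithful.
    now rewrite fmap_F_preimage, fmap_id, comp_id_l.
  - intros d1 d2 d3 g f; apply F_faithful.
    rewrite fmap_comp, !fmap_F_preimage, <- !comp_assoc.
    do 2 f_equal.
    now rewrite !comp_assoc, counitK, comp_id_l.
Defined.

Lemma equivalence_of_fully_faithful : IsEquivalence F.
Proof.
  exists pseudo_inverse.
  unshelve eexists.
  { refine (@Build_NatTrans C C (Fid C) (Fcomp pseudo_inverse F)
              (fun a => F_preimage (counit_inv (F a))) _).
    intros a b f; simpl; apply F_faithful.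
    now rewrite !fmap_comp, !fmap_F_preimage, <- !comp_assoc, counitK, comp_id_r. }
  unshelve eexists.
  { refine (@Build_NatTrans D D (Fcomp F pseudo_inverse) (Fid D) counit _).
    intros a b f; simpl.
    now rewrite fmap_F_preimage, !comp_assoc, counitK, comp_id_l. }
  split.
  - intro a; simpl; exists (F_preimage (counit (F a))).
    split; apply F_faithful; rewrite fmap_comp, !fmap_F_preimage, fmap_id.
    + apply counitK.
    + apply counit_invK.
  - intro d; simpl; exists (counit_inv d); split; auto.
Qed.

End EquivalenceCriterion.

(** * Disjoint unions of categories *)

Section SumCategory.
Variables (L : Type) (W : L -> Category).

Definition sum_ob := {i : L & ob (W i)}.

(* [sum_ob_at p e] is the component of [p], read in a summand [i] provably equal to its own;
   this lets morphisms of the union be compared at an index fixed in advance. *)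
Definition sum_ob_at (p : sum_ob) (i : L) (e : projT1 p = i) : W i :=
  eq_rect _ (fun i => ob (W i)) (projT2 p) _ e.

Local Arguments sum_ob_at p {i} e.

Definition sum_hom (p q : sum_ob) :=
  {e : projT1 p = projT1 q & hom (sum_ob_at p e) (projT2 q)}.

Definition sum_id (p : sum_ob) : sum_hom p p := existT _ eq_refl (idc (projT2 p)).

Definition sum_comp (p q r : sum_ob) (g : sum_hom q r) (f : sum_hom p q) : sum_hom p r.
Proof.
  destruct p as [i x], q as [j y], r as [k z], g as [e2 g], f as [e1 f]; simpl in *.
  destruct e2; exact (existT _ e1 (comp g f)).
Defined.

Definition SumCat : Category.
Proof.
  refine {| ob := sum_ob; hom := sum_hom; idc := sum_id; comp := sum_comp |}.
  - intros [i x] [j y] [k z] [l t] [e3 h] [e2 g] [e1 f]; simpl in *.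
    destruct e3, e2; simpl; now rewrite comp_assoc.
  - intros [i x] [j y] [e f]; simpl in *; destruct e; simpl; now rewrite comp_id_l.
  - intros [i x] [j y] [e f]; simpl in *; destruct e; simpl; now rewrite comp_id_r.
Defined.

Definition sum_inj (i : L) : Functor (W i) SumCat.
Proof.
  refine (@Build_Functor (W i) SumCat (fun x => existT (fun i => ob (W i)) i x)
            (fun a b f => existT (fun e : i = i => hom (sum_ob_at (existT _ i a) e) b)
                                 eq_refl f) _ _);
    reflexivity.
Defined.

Definition sum_copair_hom (Z : Category) (G : forall i, Functor (W i) Z) (p q : sum_ob)
  (k : sum_hom p q) : hom (G (projT1 p) (projT2 p)) (G (projT1 q) (projT2 q)).
Proof.
  destruct p as [i x], q as [j y], k as [e h]; simpl in *.
  destruct e; exact (fmap (G i) h).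
Defined.

Definition sum_copair (Z : Category) (G : forall i, Functor (W i) Z) : Functor SumCat Z.
Proof.
  refine (@Build_Functor SumCat Z (fun p : sum_ob => G (projT1 p) (projT2 p))
            (sum_copair_hom G) _ _).
  - intros [i x]; apply fmap_id.
  - intros [i x] [j y] [k z] [e2 g] [e1 f]; simpl in *.
    destruct e2, e1; apply fmap_comp.
Defined.

Lemma sum_ob_eta (p : sum_ob) (i : L) (e : projT1 p = i) :
  p = existT (fun i => ob (W i)) i (sum_ob_at p e).
Proof. destruct p as [j x]; simpl in *; now destruct e. Qed.
Local Arguments sum_ob_eta p {i} e.

Definition sum_copair_ob_at (Z : Category) (G : forall j, Functor (W j) Z) (p : sum_ob)
  (i : L) (e : projT1 p = i) : G (projT1 p) (projT2 p) = G i (sum_ob_at p e) :=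
  match e as e0 in _ = i0 return G (projT1 p) (projT2 p) = G i0 (sum_ob_at p e0) with
  | eq_refl => eq_refl
  end.
Local Arguments sum_copair_ob_at {Z} G p {i} e.

Definition sum_hom_at (p q : sum_ob) (k : sum_hom p q) (i : L) (e1 : projT1 p = i)
  (e2 : projT1 q = i) : hom (sum_ob_at p e1) (sum_ob_at q e2) :=
  hom_cast (f_equal (sum_ob_at p) (proof_irrelevance _ (eq_trans (projT1 k) e2) e1)) eq_refl
    (match e2 as e in _ = i0
           return hom (sum_ob_at p (eq_trans (projT1 k) e)) (sum_ob_at q e) with
     | eq_refl => projT2 k
     end).

Lemma sum_hom_at_id (p : sum_ob) (i : L) (e : projT1 p = i) :
  sum_hom_at (sum_id p) e e = idc (sum_ob_at p e).
Proof. destruct p as [j x]; simpl in *; destruct e; apply hom_cast_refl. Qed.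

Lemma sum_hom_at_comp (p q r : sum_ob) (g : sum_hom q r) (f : sum_hom p q) (i : L)
  (e1 : projT1 p = i) (e2 : projT1 q = i) (e3 : projT1 r = i) :
  sum_hom_at (sum_comp g f) e1 e3 = comp (sum_hom_at g e2 e3) (sum_hom_at f e1 e2).
Proof.
  destruct p as [a x], q as [b y], r as [c z], f as [ef f], g as [eg g]; simpl in *.
  destruct e3, eg, ef; simpl.
  rewrite (proof_irrelevance _ e1 eq_refl), (proof_irrelevance _ e2 eq_refl).
  unfold sum_hom_at; simpl; now rewrite !hom_cast_refl.
Qed.

Lemma fmap_sum_inj_at (p q : sum_ob) (k : sum_hom p q) (i : L) (e1 : projT1 p = i)
  (e2 : projT1 q = i) :
  fmap (sum_inj i) (sum_hom_at k e1 e2) =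
  @hom_cast SumCat _ _ _ _ (sum_ob_eta p e1) (sum_ob_eta q e2) k.
Proof.
  destruct p as [a x], q as [b y], k as [f k]; simpl in *.
  destruct e2, f; rewrite (proof_irrelevance _ e1 eq_refl).
  unfold sum_hom_at; simpl; now rewrite !hom_cast_refl.
Qed.

Lemma fmap_sum_copair_at (Z : Category) (G : forall j, Functor (W j) Z) (p q : sum_ob)
  (k : sum_hom p q) (i : L) (e1 : projT1 p = i) (e2 : projT1 q = i) :
  fmap (sum_copair G) k = hom_cast (eq_sym (sum_copair_ob_at G p e1))
    (eq_sym (sum_copair_ob_at G q e2)) (fmap (G i) (sum_hom_at k e1 e2)).
Proof.
  destruct p as [a x], q as [b y], k as [f k]; simpl in *.
  destruct e2, f; rewrite (proof_irrelevance _ e1 eq_refl).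
  unfold sum_hom_at; simpl; now rewrite hom_cast_refl.
Qed.

Lemma fmap_sum_copair_Fcomp (Z Z' : Category) (H : forall i, Functor (W i) Z)
  (G : Functor Z Z') (p q : SumCat) (k : hom p q) :
  fmap (sum_copair (fun i => Fcomp G (H i))) k = fmap G (fmap (sum_copair H) k).
Proof. destruct p as [i x], q as [j y], k as [e h]; simpl in *; now destruct e. Qed.

End SumCategory.
Arguments sum_ob_at {L W} p {i} e.
Arguments sum_ob_eta {L W} p {i} e.
Arguments sum_copair_ob_at {L W Z} G p {i} e.
Arguments sum_hom_at {L W p q} k {i} e1 e2.

Section Restriction.
Variables (L : Type) (W : L -> Category) (C : Category) (K : Functor C (SumCat W)) (i : L).
Hypothesis idx : forall c, projT1 (K c) = i.

Definition sum_restrict : Functor C (W i).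
Proof.
  refine {| fobj := fun c => sum_ob_at (K c) (idx c);
            fmap := fun c c' h => sum_hom_at (fmap K h) (idx c) (idx c') |}.
  - intro c; rewrite fmap_id; apply sum_hom_at_id.
  - intros c1 c2 c3 g f; rewrite fmap_comp; apply sum_hom_at_comp.
Defined.

Lemma sum_inj_restrict : Fcomp (sum_inj W i) sum_restrict = K.
Proof.
  apply functor_eq with (Ho := fun c => eq_sym (sum_ob_eta (K c) (idx c))).
  intros a b h.
  change (fmap K h = @hom_cast (SumCat W) _ _ _ _ (eq_sym (sum_ob_eta (K a) (idx a)))
    (eq_sym (sum_ob_eta (K b) (idx b)))
    (fmap (sum_inj W i) (sum_hom_at (fmap K h) (idx a) (idx b)))).
  rewrite fmap_sum_inj_at, hom_cast_cast; symmetry; apply hom_cast_refl.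
Qed.

Definition sum_restrict_nat (Z : Category) (G : forall j, Functor (W j) Z) (S : Functor C Z)
  (N : NatTrans S (Fcomp (sum_copair G) K)) : NatTrans S (Fcomp (G i) sum_restrict).
Proof.
  refine (@Build_NatTrans C Z S (Fcomp (G i) sum_restrict)
            (fun c => hom_cast eq_refl (sum_copair_ob_at G (K c) (idx c)) (N c)) _).
  intros c c' h; cbn [fobj fmap Fcomp sum_restrict].
  pose proof (nat_sq N h) as E; cbn [fobj fmap Fcomp] in E.
  rewrite (fmap_sum_copair_at G (fmap K h) (idx c) (idx c')) in E.
  rewrite comp_hom_cast_l.
  refine (eq_trans (f_equal (hom_cast eq_refl _) E) _).
  symmetry; apply comp_hom_cast_r.
Defined.

End Restriction.
Arguments sum_restrict {L W C} K {i} idx.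
Arguments sum_inj_restrict {L W C} K {i} idx.
Arguments sum_restrict_nat {L W C} K {i} idx {Z} G {S} N.

(** * Coproducts in Cat//X *)

Section SlashCoproduct.
Variables (X : Category) (L : Type) (A : L -> SlashOb X).

Definition slash_coprod_ob : SlashOb X :=
  {| sdom := SumCat (fun i => sdom (A i)); sfun := sum_copair (fun i => sfun (A i)) |}.

Definition slash_coprod_inj (i : L) : SlashHom (A i) slash_coprod_ob.
Proof.
  exists (sum_inj (fun i => sdom (A i)) i).
  refine (@Build_NatTrans _ _ (sfun (A i))
            (Fcomp (sfun slash_coprod_ob) (sum_inj (fun i => sdom (A i)) i))
            (fun w => idc _) _).
  intros; simpl; now rewrite comp_id_l, comp_id_r.
Defined.

Definition slash_copair (Z : SlashOb X) (g : forall i, SlashHom (A i) Z) :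
  SlashHom slash_coprod_ob Z.
Proof.
  exists (sum_copair (fun i => projT1 (g i))).
  refine (@Build_NatTrans _ _ (sfun slash_coprod_ob)
            (Fcomp (sfun Z) (sum_copair (fun i => projT1 (g i))))
            (fun p => projT2 (g (projT1 p)) (projT2 p)) _).
  intros [i x] [j y] [e f]; simpl in *; destruct e; simpl.
  apply (nat_sq (projT2 (g i))).
Defined.

Lemma slash_copair_inj (Z : SlashOb X) (g : forall i, SlashHom (A i) Z) (i : L) :
  @comp (SlashCat X) _ _ _ (slash_copair g) (slash_coprod_inj i) = g i.
Proof.
  transitivity (existT (fun f => NatTrans (sfun (A i)) (Fcomp (sfun Z) f))
                  (projT1 (g i)) (projT2 (g i))).
  2: now destruct (g i).
  simpl; unfold slash_comp; simpl.
  refine (slash_hom_ext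
            (functor_eq (F := Fcomp (sum_copair (fun i => projT1 (g i)))
                                    (sum_inj (fun i => sdom (A i)) i))
                        (G := projT1 (g i)) (fun a => eq_refl) (fun a b f => eq_refl))
            (fun w => eq_refl) _).
  intro w; simpl; now rewrite comp_id_r.
Qed.

Lemma slash_copair_unique (Z : SlashOb X) (g : forall i, SlashHom (A i) Z)
  (h : SlashHom slash_coprod_ob Z) :
  (forall i, @comp (SlashCat X) _ _ _ h (slash_coprod_inj i) = g i) -> h = slash_copair g.
Proof.
  intro H; destruct h as [hf hn].
  assert (Ho : forall p, hf p = sum_copair (fun i => projT1 (g i)) p).
  { intros [i x].
    exact (f_equal (fun F : Functor _ _ => F x) (f_equal (@projT1 _ _) (H i))). }
  assert (E : hf = sum_copair (fun i => projT1 (g i))).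
  { apply (functor_eq Ho).
    intros [i x] [j y] [e f]; simpl in *; destruct e; simpl.
    exact (fmap_functor_eq (f_equal (@projT1 _ _) (H i)) (fun a => Ho (existT _ i a)) f). }
  refine (slash_hom_ext E Ho _).
  intros [i w]; simpl.
  pose proof (ncomp_slash_hom_eq (H i) (fun w => Ho (existT _ i w)) w) as K; simpl in K.
  now rewrite K, comp_id_r.
Qed.

Definition slash_coprod : Coproduct (SlashCat X) L A :=
  @Build_Coproduct (SlashCat X) L A slash_coprod_ob slash_coprod_inj slash_copair
    slash_copair_inj slash_copair_unique.

Lemma slash_coprod_inj_mono (Y : SlashOb X) (i : L) (u v : SlashHom Y (A i)) :
  @comp (SlashCat X) _ _ _ (slash_coprod_inj i) u =
  @comp (SlashCat X) _ _ _ (slash_coprod_inj i) v -> u = v.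
Proof.
  set (inj := sum_inj (fun j => sdom (A j)) i).
  destruct u as [f1 g1], v as [f2 g2]; intro H; simpl in H.
  pose proof (f_equal (@projT1 _ _) H) as E; simpl in E.
  assert (Ho : forall w, f1 w = f2 w).
  { intro w; exact (inj_pair2 _ _ _ _ _ (f_equal (fun F : Functor _ _ => F w) E)). }
  assert (Ef : f1 = f2).
  { apply (functor_eq Ho); intros a b h.
    pose proof (fmap_functor_eq E (fun a => f_equal inj (Ho a)) h) as K.
    change (fmap inj (fmap f2 h) =
            hom_cast (f_equal inj (Ho a)) (f_equal inj (Ho b)) (fmap inj (fmap f1 h))) in K.
    rewrite <- fmap_hom_cast in K.
    exact (inj_pair2 _ _ _ _ _ K). }
  refine (slash_hom_ext Ef Ho _); intro w.
  pose proof (ncomp_slash_hom_eq H (fun w => f_equal inj (Ho w)) w) as K.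
  cbn -[hom_cast] in K; rewrite !comp_id_l in K.
  rewrite K; apply hom_cast_irrelevant.
Qed.

End SlashCoproduct.
Arguments slash_coprod_ob {X L} A.
Arguments slash_coprod_inj {X L} A i.
Arguments slash_copair {X L A Z} g.

Section SummandRestriction.
Variables (X : Category) (L : Type) (B B' : L -> SlashOb X).
Variables (k : SlashHom (slash_coprod_ob B) (slash_coprod_ob B')) (i : L).
Hypothesis idx : forall z, projT1 (projT1 k (existT (fun j => ob (sdom (B j))) i z)) = i.

Let K := Fcomp (projT1 k) (sum_inj (fun j => sdom (B j)) i).

Definition summand_nat :
  NatTrans (sfun (B i)) (Fcomp (sum_copair (fun j => sfun (B' j))) K) :=
  @Build_NatTrans _ _ (sfun (B i)) (Fcomp (sum_copair (fun j => sfun (B' j))) K)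
    (fun z => projT2 k (existT _ i z))
    (fun a b h => nat_sq (projT2 k) (fmap (sum_inj (fun j => sdom (B j)) i) h)).

Definition summand_restrict : SlashHom (B i) (B' i) :=
  existT (fun F => NatTrans (sfun (B i)) (Fcomp (sfun (B' i)) F))
    (sum_restrict K idx) (sum_restrict_nat K idx (fun j => sfun (B' j)) summand_nat).

End SummandRestriction.
Arguments summand_restrict {X L B B'} k {i} idx.

Lemma summand_restrict_inj (X : Category) (L : Type) (B B' : L -> SlashOb X)
  (k : SlashHom (slash_coprod_ob B) (slash_coprod_ob B')) (i : L)
  (idx : forall z, projT1 (projT1 k (existT (fun j => ob (sdom (B j))) i z)) = i) :
  @comp (SlashCat X) _ _ _ k (slash_coprod_inj B i) =
  @comp (SlashCat X) _ _ _ (slash_coprod_inj B' i) (summand_restrict k idx).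
Proof.
  revert idx; destruct k as [g d]; intro idx; simpl; unfold slash_comp.
  refine (@slash_hom_ext X (B i) (slash_coprod_ob B') _ _ _ _
            (eq_sym (sum_inj_restrict (Fcomp g (sum_inj _ i)) idx))
            (fun z => sum_ob_eta (g (existT _ i z)) (idx z)) _).
  intro w; cbn -[hom_cast]; rewrite comp_id_l, comp_id_r.
  exact (hom_cast_irrelevant (C := X) eq_refl eq_refl
           (sum_copair_ob_at (fun j => sfun (B' j)) (g (existT _ i w)) (idx w)) _ _).
Qed.

Section IndexPreservation.
Variables (X : Category) (L : Type) (A : L -> SlashOb X).

Lemma slash_copair_index (Y : L -> SlashOb X) (s : forall j, SlashHom (Y j) (A j))
  (p : sum_ob (fun j => sdom (Y j))) :
  projT1 (projT1 (slash_copair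
                    (fun j => @comp (SlashCat X) _ _ _ (slash_coprod_inj A j) (s j))) p) =
  projT1 p.
Proof. destruct p as [j w]; simpl; now destruct (s j). Qed.

Lemma over_coprod_index (B B' : L -> SlashOb X) (s : forall j, SlashHom (B j) (A j))
  (s' : forall j, SlashHom (B' j) (A j)) (k : SlashHom (slash_coprod_ob B) (slash_coprod_ob B'))
  (H : @comp (SlashCat X) _ _ _
         (slash_copair (fun j => @comp (SlashCat X) _ _ _ (slash_coprod_inj A j) (s' j))) k =
       slash_copair (fun j => @comp (SlashCat X) _ _ _ (slash_coprod_inj A j) (s j)))
  (i : L) (z : sdom (B i)) :
  projT1 (projT1 k (existT (fun j => ob (sdom (B j))) i z)) = i.
Proof.
  pose proof (f_equal (fun F : Functor (sdom (slash_coprod_ob B)) (sdom (slash_coprod_ob A)) =>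
                         projT1 (F (existT _ i z)))
                (f_equal (@projT1 _ _) H)) as E; cbv beta in E.
  rewrite slash_comp_fobj, !slash_copair_index in E.
  exact E.
Qed.

End IndexPreservation.
Arguments over_coprod_index {X L A B B' s s' k} H i z.

(** * Decomposing a category along a map to an index set *)

Section FibreDecomposition.
Variables (C : Category) (L : Type) (ix : C -> L).
Hypothesis ix_hom : forall c c', hom c c' -> ix c = ix c'.

Definition fibre (i : L) : Category.
Proof.
  refine {| ob := {c : C & ix c = i}; hom := fun p q => hom (projT1 p) (projT1 q);
            idc := fun p => idc (projT1 p); comp := fun p q r g h => comp g h |};
    intros; [apply comp_assoc | apply comp_id_l | apply comp_id_r].
Defined.

Definition fibre_incl (i : L) : Functor (fibre i) C.
Proof.
  refine (@Build_Functor (fibre i) C (fun p => projT1 p) (fun p q h => h) _ _); reflexivity.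
Defined.

Definition fibres_glue : Functor (SumCat fibre) C := sum_copair fibre_incl.

Lemma projT1_fibre_cast (j j' : L) (E : j = j') (p : fibre j) :
  projT1 (eq_rect j (fun j => ob (fibre j)) p j' E) = projT1 p.
Proof. now destruct E. Qed.

Lemma fmap_fibres_glue (p q : SumCat fibre) (E : projT1 p = projT1 q)
  (h : @hom (fibre (projT1 q)) (sum_ob_at p E) (projT2 q)) :
  fmap fibres_glue (existT _ E h : @hom (SumCat fibre) p q) =
  hom_cast (projT1_fibre_cast E (projT2 p)) eq_refl h.
Proof. destruct p as [i x], q as [j y]; simpl in *; destruct E; now rewrite hom_cast_refl. Qed.

Lemma fibres_glue_faithful (p q : SumCat fibre) (k1 k2 : hom p q) :
  fmap fibres_glue k1 = fmap fibres_glue k2 -> k1 = k2.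
Proof.
  destruct k1 as [E1 h1], k2 as [E2 h2]; rewrite !fmap_fibres_glue.
  destruct (proof_irrelevance _ E1 E2); intro H.
  rewrite <- (hom_castK (projT1_fibre_cast E1 (projT2 p)) (eq_refl (projT1 (projT2 q))) h1),
          <- (hom_castK (projT1_fibre_cast E1 (projT2 p)) (eq_refl (projT1 (projT2 q))) h2), H.
  reflexivity.
Qed.

Definition fibres_split_ob (c : C) : SumCat fibre :=
  existT (fun i => ob (fibre i)) (ix c) (existT (fun c' => ix c' = ix c) c eq_refl).

Definition fibres_split_hom (c c' : C) (h : hom c c') :
  hom (fibres_split_ob c) (fibres_split_ob c') :=
  existT _ (ix_hom h)
    (hom_cast (eq_sym (projT1_fibre_cast (ix_hom h) (projT2 (fibres_split_ob c)))) eq_refl h).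

Lemma fibres_glue_split_hom (c c' : C) (h : hom c c') :
  fmap fibres_glue (fibres_split_hom h) = h.
Proof. unfold fibres_split_hom; now rewrite fmap_fibres_glue, hom_cast_cast, hom_cast_refl. Qed.

Definition fibres_split : Functor C (SumCat fibre).
Proof.
  refine (@Build_Functor C (SumCat fibre) fibres_split_ob fibres_split_hom _ _).
  - intro c; apply fibres_glue_faithful; now rewrite fibres_glue_split_hom, fmap_id.
  - intros a b c g h; apply fibres_glue_faithful.
    now rewrite fmap_comp, !fibres_glue_split_hom.
Defined.

Lemma fibres_glue_split : Fcomp fibres_glue fibres_split = Fid C.
Proof.
  refine (@functor_eq _ _ (Fcomp fibres_glue fibres_split) (Fid C) (fun c => eq_refl) _).
  intros a b h.
  symmetry; apply fibres_glue_split_hom.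
Qed.

Lemma fibres_split_glue_ob (p : SumCat fibre) : fibres_split (fibres_glue p) = p.
Proof. destruct p as [i [c e]]; simpl in *; now destruct e. Qed.

Lemma fibres_split_glue : Fcomp fibres_split fibres_glue = Fid (SumCat fibre).
Proof.
  refine (@functor_eq _ _ (Fcomp fibres_split fibres_glue) (Fid (SumCat fibre))
            fibres_split_glue_ob _).
  intros p q k.
  apply fibres_glue_faithful; cbn [fmap Fid Fcomp].
  rewrite fmap_hom_cast, hom_cast_refl.
  symmetry; apply fibres_glue_split_hom.
Qed.

End FibreDecomposition.

Section SlashFibres.
Variables (X : Category) (L : Type) (A : L -> SlashOb X) (B : SlashOb X)
  (f : Functor (sdom B) (SumCat (fun j => sdom (A j)))).

Definition fibre_index (y : sdom B) : L := projT1 (f y).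

Definition fibre_index_hom (y y' : sdom B) (h : hom y y') : fibre_index y = fibre_index y' :=
  projT1 (fmap f h).

Definition fibre_ob (i : L) : SlashOb X :=
  {| sdom := fibre fibre_index i; sfun := Fcomp (sfun B) (fibre_incl fibre_index i) |}.

Definition glue_nat :
  NatTrans (sfun (slash_coprod_ob fibre_ob)) (Fcomp (sfun B) (fibres_glue fibre_index)).
Proof.
  refine (@Build_NatTrans _ _ (sfun (slash_coprod_ob fibre_ob))
            (Fcomp (sfun B) (fibres_glue fibre_index))
            (fun p => idc (sfun B (projT1 (projT2 p)))) _).
  intros [i [y e]] [j [y' e']] [E h]; simpl in *; destruct E; simpl.
  now rewrite comp_id_l, comp_id_r.
Defined.

Definition split_nat :
  NatTrans (sfun B) (Fcomp (sfun (slash_coprod_ob fibre_ob)) (fibres_split fibre_index_hom)).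
Proof.
  refine (@Build_NatTrans _ _ (sfun B)
            (Fcomp (sfun (slash_coprod_ob fibre_ob)) (fibres_split fibre_index_hom))
            (fun y => idc (sfun B y)) _).
  intros y y' h; cbn [fobj fmap Fcomp]; rewrite comp_id_l, comp_id_r.
  symmetry.
  exact (eq_trans (fmap_sum_copair_Fcomp (fibre_incl fibre_index) (sfun B)
                     (fmap (fibres_split fibre_index_hom) h))
                  (f_equal (fmap (sfun B)) (fibres_glue_split_hom fibre_index_hom h))).
Defined.

Definition glue_hom : SlashHom (slash_coprod_ob fibre_ob) B :=
  existT _ (fibres_glue fibre_index) glue_nat.

Definition split_hom : SlashHom B (slash_coprod_ob fibre_ob) :=
  existT _ (fibres_split fibre_index_hom) split_nat.

Lemma glue_split_hom : @comp (SlashCat X) _ _ _ glue_hom split_hom = @idc (SlashCat X) B.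
Proof.
  refine (@slash_hom_ext X B B _ _ _ _ (fibres_glue_split fibre_index_hom)
            (fun y => eq_refl) _).
  intro w; cbn -[hom_cast]; symmetry; apply comp_id_l.
Qed.

Lemma split_glue_hom :
  @comp (SlashCat X) _ _ _ split_hom glue_hom = @idc (SlashCat X) (slash_coprod_ob fibre_ob).
Proof.
  refine (@slash_hom_ext X (slash_coprod_ob fibre_ob) (slash_coprod_ob fibre_ob) _ _ _ _
            (fibres_split_glue fibre_index_hom) (fibres_split_glue_ob fibre_index_hom) _).
  intro w; cbn -[hom_cast]; rewrite hom_cast_refl; symmetry; apply comp_id_l.
Qed.

Variable g : NatTrans (sfun B) (Fcomp (sfun (slash_coprod_ob A)) f).

Definition fibre_proj (i : L) : Functor (fibre fibre_index i) (sdom (A i)) :=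
  sum_restrict (Fcomp f (fibre_incl fibre_index i)) (fun p => projT2 p).

Definition fibre_whisker (i : L) :
  NatTrans (sfun (fibre_ob i))
    (Fcomp (sum_copair (fun j => sfun (A j))) (Fcomp f (fibre_incl fibre_index i))) :=
  @Build_NatTrans _ _ (sfun (fibre_ob i))
    (Fcomp (sum_copair (fun j => sfun (A j))) (Fcomp f (fibre_incl fibre_index i)))
    (fun p => g (projT1 p)) (fun p q h => nat_sq g h).

Definition fibre_hom (i : L) : SlashHom (fibre_ob i) (A i) :=
  existT _ (fibre_proj i)
    (sum_restrict_nat (Fcomp f (fibre_incl fibre_index i)) (fun p => projT2 p)
       (fun j => sfun (A j)) (fibre_whisker i)).

Lemma comp_glue_hom :
  @comp (SlashCat X) _ _ _ (existT _ f g : SlashHom B (slash_coprod_ob A)) glue_hom =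
  slash_copair (fun i => @comp (SlashCat X) _ _ _ (slash_coprod_inj A i) (fibre_hom i)).
Proof.
  apply slash_copair_unique; intro i; simpl; unfold slash_comp.
  assert (E : Fcomp (Fcomp f (fibres_glue fibre_index)) (sum_inj (fibre fibre_index) i) =
              Fcomp f (fibre_incl fibre_index i)).
  { exact (@functor_eq _ _ (Fcomp (Fcomp f (fibres_glue fibre_index))
                                  (sum_inj (fibre fibre_index) i))
             (Fcomp f (fibre_incl fibre_index i)) (fun _ => eq_refl) (fun _ _ _ => eq_refl)). }
  refine (@slash_hom_ext X (fibre_ob i) (slash_coprod_ob A) _ _ _ _
            (eq_trans E (eq_sym (sum_inj_restrict (Fcomp f (fibre_incl fibre_index i))
                                   (fun p => projT2 p))))
            (fun p => sum_ob_eta (f (projT1 p)) (projT2 p)) _).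
  intro p; cbn -[hom_cast]; rewrite comp_id_l, !comp_id_r.
  exact (hom_cast_irrelevant (C := X) eq_refl eq_refl
           (sum_copair_ob_at (fun j => sfun (A j)) (f (projT1 p)) (projT2 p)) _ _).
Qed.

End SlashFibres.

(** * The comparison functor *)

Section Comparison.
(* Fixing the universes of Cat//X keeps all occurrences of [SlashCat X] at one instance;
   with fresh instances, unifying the coproduct objects below unfolds them at great cost. *)
Universes s xo xh so sh.
Variables (X : Category@{xo xh}) (L : Type@{s}) (A : L -> SlashOb@{s xo xh} X).
Local Notation SlashCatX := (SlashCat@{s xo xh so sh} X).

Definition slash_coprods : HasCoproducts SlashCatX := fun L' A' => slash_coprod A'.

Definition ProdSlices := ProdCat (fun i => @Slice SlashCatX (A i)).
Definition comparison := CoprodFunctor slash_coprods A.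

Lemma comparison_faithful (x y : ProdSlices) (f g : hom x y) :
  fmap comparison f = fmap comparison g -> f = g.
Proof.
  intro H; apply functional_extensionality_dep; intro i.
  assert (Hi : @comp SlashCatX _ _ _ (slash_coprod_inj (fun j => projT1 (y j)) i)
                 (proj1_sig (f i)) =
               @comp SlashCatX _ _ _ (slash_coprod_inj (fun j => projT1 (y j)) i)
                 (proj1_sig (g i))).
  { pose proof (f_equal (fun k => @comp SlashCatX _ _ _ (proj1_sig k)
                                    (slash_coprod_inj (fun j => projT1 (x j)) i)) H) as K.
    pose proof (fun h : hom x y => slash_copair_inj (fun j => @comp SlashCatX _ _ _
                  (slash_coprod_inj (fun j => projT1 (y j)) j) (proj1_sig (h j))) i) as Hcopair.
    exact (eq_trans (eq_sym (Hcopair f)) (eq_trans K (Hcopair g))). }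
  apply (slash_coprod_inj_mono (A := fun j => projT1 (y j))) in Hi.
  destruct (f i) as [fi Hf], (g i) as [gi Hg]; simpl in Hi; subst gi.
  f_equal; apply proof_irrelevance.
Qed.

Lemma comparison_index (x y : ProdSlices) (u : hom (comparison x) (comparison y)) (i : L)
  (z : sdom (projT1 (x i))) :
  projT1 (projT1 (proj1_sig u) (existT (fun j => ob (sdom (projT1 (x j)))) i z)) = i.
Proof. exact (over_coprod_index (proj2_sig u) i z). Qed.

Arguments comparison_index {x y} u i z.

Lemma comparison_preimage_over (x y : ProdSlices) (u : hom (comparison x) (comparison y)) (i : L) :
  @comp SlashCatX _ _ _ (projT2 (y i))
    (summand_restrict (proj1_sig u) (comparison_index u i)) = projT2 (x i).
Proof.
  apply (slash_coprod_inj_mono (A := A)).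
  pose proof (proj2_sig u) as Hu; cbv beta in Hu.
  rewrite (@comp_assoc SlashCatX).
  rewrite <- (slash_copair_inj
               (fun j => @comp SlashCatX _ _ _ (slash_coprod_inj A j) (projT2 (y j))) i).
  rewrite <- (@comp_assoc SlashCatX).
  transitivity (@comp SlashCatX _ _ _ (projT2 (comparison y))
                  (@comp SlashCatX _ _ _ (proj1_sig u)
                     (slash_coprod_inj (fun j => projT1 (x j)) i))).
  { f_equal; symmetry; exact (summand_restrict_inj (comparison_index u i)). }
  rewrite (@comp_assoc SlashCatX), Hu.
  exact (slash_copair_inj
           (fun j => @comp SlashCatX _ _ _ (slash_coprod_inj A j) (projT2 (x j))) i).
Qed.

Definition comparison_preimage (x y : ProdSlices) (u : hom (comparison x) (comparison y)) :
  hom x y :=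
  fun i => exist _ (summand_restrict (proj1_sig u) (comparison_index u i))
                   (comparison_preimage_over u i).

Lemma fmap_comparison_preimage (x y : ProdSlices) (u : hom (comparison x) (comparison y)) :
  fmap comparison (comparison_preimage u) = u.
Proof.
  destruct u as [k Hk]; apply subset_eq_compat.
  symmetry; apply slash_copair_unique; intro i.
  exact (summand_restrict_inj (comparison_index (exist _ k Hk) i)).
Qed.

Definition CoprodSlice := @Slice SlashCatX (slash_coprod_ob A).

Definition decompose (d : CoprodSlice) : ProdSlices :=
  fun i => existT (fun C => SlashHom C (A i)) (fibre_ob (projT1 (projT2 d)) i)
                  (fibre_hom (projT2 (projT2 d)) i).

Lemma counit_over (d : CoprodSlice) :
  @comp SlashCatX _ _ _ (projT2 d) (glue_hom (projT1 (projT2 d))) =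
  projT2 (comparison (decompose d)).
Proof. destruct d as [B [f g]]; exact (comp_glue_hom g). Qed.

Definition counit (d : CoprodSlice) : hom (comparison (decompose d)) d :=
  exist _ (glue_hom (projT1 (projT2 d))) (counit_over d).

Lemma counit_inv_over (d : CoprodSlice) :
  @comp SlashCatX _ _ _ (projT2 (comparison (decompose d))) (split_hom (projT1 (projT2 d))) =
  projT2 d.
Proof.
  rewrite <- counit_over, <- (@comp_assoc SlashCatX), glue_split_hom.
  apply (@comp_id_r SlashCatX).
Qed.

Definition counit_inv (d : CoprodSlice) : hom d (comparison (decompose d)) :=
  exist _ (split_hom (projT1 (projT2 d))) (counit_inv_over d).

Lemma counitK (d : CoprodSlice) : comp (counit d) (counit_inv d) = idc d.
Proof. apply subset_eq_compat; apply glue_split_hom. Qed.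

Lemma counit_invK (d : CoprodSlice) :
  comp (counit_inv d) (counit d) = idc (comparison (decompose d)).
Proof. apply subset_eq_compat; apply split_glue_hom. Qed.

Lemma comparison_equivalence : IsEquivalence comparison.
Proof.
  exact (equivalence_of_fully_faithful comparison_faithful fmap_comparison_preimage
           counitK counit_invK).
Qed.

End Comparison.

(* With the 2-cells of Cat//X oriented a => b o f, no initial object of X is needed. *)
Theorem mainTheorem6@{s xo xh +} (X : Category@{xo xh}) :
  HasInitial X -> InfExtensive@{s _ _ _ _ _} (SlashCat@{s xo xh _ _} X).
Proof.
  intros _; exists (@slash_coprods X); intros L A.
  exact (comparison_equivalence A).
Qed.
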